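(* Let $n\ge2$, let $\mathbf{q}\in\mathbb{R}^n$ with $\sum_i\mathbf{q}_i=1$ and $\mathbf{q}\neq\mathbf{1}/n$, let $1/n<t<1$, and let $i$ be an index with $\mathbf{q}_i=\min_j\mathbf{q}_j$. Define $\bar{\mathbf{q}}=\frac{\mathbf{1}}{n}+\frac{1}{1-n\mathbf{q}_i}\big(\mathbf{q}-\frac{\mathbf{1}}{n}\big)$. If $\bar{\mathbf{q}}\cdot\bar{\mathbf{q}}<t$, then there exists a maximizer $\mathbf{p}^*$ of $\mathbf{p}\cdot\mathbf{q}$ over $P(t)$ with $\mathbf{p}^*_i=0$.
   Context: $\mathbf{1}\in\mathbb{R}^n$ is the all-ones vector. $P(t)=\{\mathbf{p}\in\mathbb{R}^n:\mathbf{p}\ge0,\ \sum_i\mathbf{p}_i=1,\ \mathbf{p}\cdot\mathbf{p}\le t\}$. *)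

From HB Require Import structures.
From mathcomp Require Import all_boot all_order all_algebra.
From mathcomp Require Import reals.
Set Implicit Arguments. Unset Strict Implicit. Unset Printing Implicit Defensive.
Import Order.TTheory GRing.Theory Num.Theory.
Local Open Scope ring_scope.

Definition dot (R : realType) (n : nat) (p q : 'I_n -> R) : R :=
  \sum_(j < n) p j * q j.

Definition inP (R : realType) (n : nat) (t : R) (p : 'I_n -> R) : Prop :=
  (forall j, 0 <= p j) /\ \sum_(j < n) p j = 1 /\ dot p p <= t.

Definition unif (R : realType) (n : nat) : 'I_n -> R := fun _ => n%:R^-1.

Definition qbar (R : realType) (n : nat) (q : 'I_n -> R) (i : 'I_n) : 'I_n -> R :=
  fun j => n%:R^-1 + (1 - n%:R * q i)^-1 * (q j - n%:R^-1).

From HB Require Import structures.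
From mathcomp Require Import all_boot all_order all_algebra.
From mathcomp Require Import boolp reals topology normedtype.
From mathcomp Require Import ring lra.
Import Order.TTheory GRing.Theory Num.Theory numFieldNormedType.Exports.
Local Open Scope ring_scope.

(* The maximizer of [p.q] over [P(t)] is a water-filling vector [(q - th)_+ / S(th)],
   where [S(th)] is the sum of the entries of [(q - th)_+].  The threshold [th] is chosen
   so that either the constraint [p.p <= t] is tight, i.e. the gap
   [N(th) - t S(th)^2] vanishes with [N(th) = (q - th)_+ . (q - th)_+], or [th] is the
   second largest value of [q], in which case the vector is uniform on the maximal
   entries of [q] and attains the trivial bound [max q].  At [th = q_i] the vector is
   exactly [qbar], so [qbar.qbar < t] says that the gap is negative at [q_i]; by the
   intermediate value theorem the threshold can be taken [>= q_i], hence [p*_i = 0]. *)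

Section Extrema.
Context {d : Order.disp_t} {T : orderType d} {I : finType} (f : I -> T).

Lemma exists_max (i0 : I) : exists j, forall k, (f k <= f j)%O.
Proof.
by case: (arg_maxP f (isT : predT i0)) => j _ jmax; exists j => k; apply: jmax.
Qed.

Lemma exists_second_max {i j : I} : (f i < f j)%O ->
  exists k, (f k < f j)%O /\ forall l, (f l < f j)%O -> (f l <= f k)%O.
Proof.
move=> fij; case: (arg_maxP f (fij : (fun l => f l < f j)%O i)) => k fkj kmax.
by exists k; split => // l; apply: kmax.
Qed.

End Extrema.

Lemma mul2_dot_le {R : realType} {n : nat} (c : R) (p v : 'I_n -> R) :
  2 * c * dot p v <= c ^+ 2 * dot p p + dot v v.
Proof.
rewrite /dot !mulr_sumr -big_split /=; apply: ler_sum => j _.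
rewrite -subr_ge0.
have -> : c ^+ 2 * (p j * p j) + v j * v j - 2 * c * (p j * v j) = (c * p j - v j) ^+ 2
  by ring.
exact: sqr_ge0.
Qed.

Definition excess {R : realType} {n : nat} (q : 'I_n -> R) (th : R) (j : 'I_n) : R :=
  Num.max (q j - th) 0.

Definition excess_sum {R : realType} {n : nat} (q : 'I_n -> R) (th : R) : R :=
  \sum_(j < n) excess q th j.

Definition excess_gap {R : realType} {n : nat} (q : 'I_n -> R) (t th : R) : R :=
  dot (excess q th) (excess q th) - t * excess_sum q th ^+ 2.

Definition excess_dist {R : realType} {n : nat} (q : 'I_n -> R) (th : R) (j : 'I_n) : R :=
  excess q th j / excess_sum q th.

Section Excess.
Context {R : realType} {n : nat} {q : 'I_n -> R}.
Local Notation excess := (excess q).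
Local Notation excess_sum := (excess_sum q).
Local Notation excess_gap := (excess_gap q).
Local Notation excess_dist := (excess_dist q).

Lemma excess_ge0 th j : 0 <= excess th j.
Proof. by rewrite le_max lexx orbT. Qed.

Lemma excess_geB th j : q j - th <= excess th j.
Proof. by rewrite le_max lexx. Qed.

Lemma excess_eq0 th j : q j <= th -> excess th j = 0.
Proof. by move=> qjth; apply/max_r; rewrite subr_le0. Qed.

Lemma excess_mulB th j : excess th j * (q j - th) = excess th j ^+ 2.
Proof.
by rewrite /excess; case: leP => _; rewrite expr2 ?mul0r.
Qed.

Lemma excess_sum_gt0 {th j} : th < q j -> 0 < excess_sum th.
Proof.
move=> thqj; rewrite /excess_sum (bigD1 j) //=.
have := excess_geB th j.
have : 0 <= \sum_(k < n | k != j) excess th k by apply: sumr_ge0 => k _; exact: excess_ge0.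
lra.
Qed.

Lemma excess_dist_eq0 th j : q j <= th -> excess_dist th j = 0.
Proof. by move=> qjth; rewrite /excess_dist excess_eq0 ?mul0r. Qed.

Lemma sum_excess_dist th : excess_sum th != 0 -> \sum_(j < n) excess_dist th j = 1.
Proof. by move=> S0; rewrite -mulr_suml mulfV. Qed.

Lemma dot_excess_dist_self th :
  dot (excess_dist th) (excess_dist th) = dot (excess th) (excess th) / excess_sum th ^+ 2.
Proof.
by rewrite /dot mulr_suml; apply: eq_bigr => j _; rewrite /excess_dist expr2 invfM mulrACA.
Qed.

Lemma dot_excess_dist th : excess_sum th != 0 ->
  dot (excess_dist th) q = th + dot (excess th) (excess th) / excess_sum th.
Proof.
move=> S0; rewrite /dot.
under eq_bigr => j _ do rewrite -[q j](subrK th) mulrDr.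
rewrite big_split /= -mulr_suml sum_excess_dist // mul1r addrC mulr_suml.
congr (_ + _); apply: eq_bigr => j _.
by rewrite /excess_dist mulrAC excess_mulB expr2.
Qed.

Lemma inP_excess_dist t th : 0 < excess_sum th -> excess_gap t th <= 0 ->
  inP t (excess_dist th).
Proof.
move=> S0 gap_le; split; [|split].
- by move=> j; rewrite divr_ge0 ?excess_ge0 ?ltW.
- by rewrite sum_excess_dist ?gt_eqF.
- rewrite dot_excess_dist_self ler_pdivrMr ?exprn_gt0 //.
  by move: gap_le; rewrite /excess_gap subr_le0.
Qed.

Lemma dot_le_add_excess th (p : 'I_n -> R) :
  (forall j, 0 <= p j) -> \sum_(j < n) p j = 1 -> dot p q <= th + dot p (excess th).
Proof.
move=> p0 p1; rewrite /dot -[X in X + _]mulr1 -p1 mulr_sumr -big_split /=.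
apply: ler_sum => j _; have := excess_geB th j; have := p0 j; nra.
Qed.

Lemma dot_le_max M (p : 'I_n -> R) :
  (forall j, 0 <= p j) -> \sum_(j < n) p j = 1 -> (forall j, q j <= M) -> dot p q <= M.
Proof.
move=> p0 p1 qM; rewrite /dot -[M]mul1r -p1 mulr_suml.
by apply: ler_sum => j _; rewrite ler_wpM2l.
Qed.

(* With [v = (q - th)_+]: [2 S p.v <= S^2 p.p + v.v <= S^2 t + v.v = 2 v.v],
   so [p.q <= th + p.v <= th + v.v / S]. *)
Lemma excess_dist_ub_balanced t th (p : 'I_n -> R) :
  0 < excess_sum th -> excess_gap t th = 0 -> inP t p ->
  dot p q <= dot (excess_dist th) q.
Proof.
move=> S0 gap0 [p0 [p1 pt]].
rewrite dot_excess_dist ?gt_eqF //.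
apply: (le_trans (dot_le_add_excess th p p0 p1)); rewrite lerD2l ler_pdivlMr //.
have := mul2_dot_le (excess_sum th) p (excess th).
have : excess_sum th ^+ 2 * dot p p <= excess_sum th ^+ 2 * t by rewrite ler_pM2l ?exprn_gt0.
move: gap0; rewrite /excess_gap; nra.
Qed.

Lemma excess_dist_ub_flat t th M (p : 'I_n -> R) :
  0 < excess_sum th -> (forall j, q j <= M) ->
  (forall j, excess th j ^+ 2 = (M - th) * excess th j) -> inP t p ->
  dot p q <= dot (excess_dist th) q.
Proof.
move=> S0 qM flat [p0 [p1 _]]; rewrite dot_excess_dist ?gt_eqF //.
have -> : dot (excess th) (excess th) = (M - th) * excess_sum th.
  by rewrite /dot /excess_sum mulr_sumr; apply: eq_bigr => j _; rewrite -flat expr2.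
rewrite mulfK ?gt_eqF // addrC subrK.
exact: dot_le_max.
Qed.

Lemma excess_dist_maximizer {t th M} :
  (forall j, q j <= M) -> 0 < excess_sum th -> excess_gap t th <= 0 ->
  excess_gap t th = 0 \/ (forall j, excess th j ^+ 2 = (M - th) * excess th j) ->
  inP t (excess_dist th) /\
  forall p : 'I_n -> R, inP t p -> dot p q <= dot (excess_dist th) q.
Proof.
move=> qM S0 gap_le [gap0|flat]; split; try exact: inP_excess_dist.
- by move=> p; exact: excess_dist_ub_balanced.
- by move=> p; exact: excess_dist_ub_flat flat.
Qed.

Lemma excess_flat_at_second_max M M2 :
  (forall j, q j <= M) -> (forall j, q j < M -> q j <= M2) ->
  forall j, excess M2 j ^+ 2 = (M - M2) * excess M2 j.
Proof.
move=> qM qM2 j; case: (leP (q j) M2) => [qjM2|M2qj].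
  by rewrite excess_eq0 // expr2 !mulr0.
have qjM : q j = M.
  case: (ltP (q j) M) => [/qM2|Mqj]; first lra.
  by apply/eqP; rewrite eq_le qM.
by rewrite -excess_mulB qjM mulrC.
Qed.

Lemma continuous_excess j : continuous (excess ^~ j).
Proof.
move=> x; apply: (@continuous_max _ R (fun th => q j - th) (fun=> 0)); last exact: cst_continuous.
by apply: continuousB; [exact: cst_continuous | exact: cvg_id].
Qed.

Lemma continuous_excess_gap t : continuous (excess_gap t).
Proof.
have Scont : continuous excess_sum.
  by apply: continuous_big; [exact: add_continuous | move=> j _; exact: continuous_excess].
have Ncont : continuous (fun th => dot (excess th) (excess th)).
  apply: continuous_big; first exact: add_continuous.
  by move=> j _ x; have := continuousM (continuous_excess j x) (continuous_excess j x).
move=> x; have := continuousB (Ncont x)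
  (continuousM (@cst_continuous _ _ t x) (continuousM (Scont x) (Scont x))).
exact.
Qed.

Lemma exists_excess_threshold {t a M M2} :
  (forall j, q j <= M) -> (forall j, q j < M -> q j <= M2) -> a <= M2 -> M2 < M ->
  excess_gap t a < 0 ->
  exists th, [/\ a <= th, th < M, excess_gap t th <= 0 &
    excess_gap t th = 0 \/ forall j, excess th j ^+ 2 = (M - th) * excess th j].
Proof.
move=> qM qM2 aM2 M2M gap_a.
have [gap2_le|gap2_gt] := leP (excess_gap t M2) 0.
  by exists M2; split => //; right; exact: excess_flat_at_second_max.
have [c c_in gap_c] : exists2 c, c \in `[a, M2] & excess_gap t c = 0.
  apply: IVT => //; first exact/continuous_subspaceT/continuous_excess_gap.
  by rewrite ge_min le_max (ltW gap_a) (ltW gap2_gt) orbT.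
move: c_in; rewrite in_itv /= => /andP[ac cM2].
by exists c; split => //; [exact: le_lt_trans M2M | rewrite gap_c | left].
Qed.

Hypothesis sum_q : \sum_(j < n) q j = 1.

Lemma eq_unif_const c : (forall j, q j = c) -> q = @unif R n.
Proof.
move=> qc; have c1 : n%:R * c = 1.
  by rewrite mulr_natl -sum_q (eq_bigr _ (fun j _ => qc j)) sumr_const card_ord.
have n0 : n%:R != 0 :> R.
  by apply/eqP => n0; move: c1; rewrite n0 mul0r => /esym/eqP; rewrite oner_eq0.
by apply: funext => j; rewrite /unif qc; apply: (mulfI n0); rewrite mulfV // c1.
Qed.

Variable i : 'I_n.
Hypothesis qi_min : forall j, q i <= q j.

Lemma excess_sum_at_min : excess_sum (q i) = 1 - n%:R * q i.
Proof.
have -> : 1 - n%:R * q i = \sum_(j < n) (q j - q i).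
  by rewrite sumrB sum_q sumr_const card_ord mulr_natl.
by apply: eq_bigr => j _; rewrite /excess max_l // subr_ge0.
Qed.

Lemma qbar_excess_dist : excess_sum (q i) != 0 -> qbar q i = excess_dist (q i).
Proof.
have n0 : n%:R != 0 :> R by rewrite pnatr_eq0 -lt0n (leq_ltn_trans _ (ltn_ord i)).
rewrite excess_sum_at_min => S0; apply: funext => j.
rewrite /qbar /excess_dist excess_sum_at_min /excess max_l ?subr_ge0 //.
by field; rewrite S0 n0.
Qed.

Lemma excess_gap_at_min_lt0 {t j} : q i < q j ->
  dot (qbar q i) (qbar q i) < t -> excess_gap t (q i) < 0.
Proof.
move=> qij; have S0 := excess_sum_gt0 qij.
rewrite qbar_excess_dist ?gt_eqF // dot_excess_dist_self ltr_pdivrMr ?exprn_gt0 //.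
by rewrite /excess_gap; lra.
Qed.

End Excess.

Theorem mainTheorem10 (R : realType) (n : nat) (q : 'I_n -> R) (t : R) (i : 'I_n) :
  (2 <= n)%N ->
  \sum_(j < n) q j = 1 ->
  q <> @unif R n ->
  n%:R^-1 < t -> t < 1 ->
  (forall j, q i <= q j) ->
  dot (qbar q i) (qbar q i) < t ->
  exists pstar : 'I_n -> R,
    [/\ inP t pstar,
        (forall p : 'I_n -> R, inP t p -> dot p q <= dot pstar q) &
        pstar i = 0].
Proof.
move=> _ sum_q q_nunif _ _ qi_min qbar_t.
have [jM qM] := exists_max q i.
have qiM : q i < q jM.
  rewrite lt_neqAle qM andbT; apply/eqP => qiM; apply/q_nunif/(eq_unif_const sum_q (q i)) => j.
  by apply/eqP; rewrite eq_le qi_min andbT qiM qM.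
have [j2 [j2M j2max]] := exists_second_max q qiM.
have [th [qi_th thM gap_le gap_cases]] := exists_excess_threshold qM j2max (j2max _ qiM) j2M
  (excess_gap_at_min_lt0 sum_q i qi_min qiM qbar_t).
have [inP_d d_max] := excess_dist_maximizer qM (excess_sum_gt0 thM) gap_le gap_cases.
by exists (excess_dist q th); split => //; exact: excess_dist_eq0.
Qed.
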